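(* Let $X$ be an indiscrete topological space. Then for any starting points $m,l\in X$, the lion has a strategy in $X$ for the starting points $m$ (man) and $l$ (lion).
   Context: For a topological space $X$ and $x\in X$, let $P_x(X)$ be the set of continuous maps $\gamma:[0,+\infty)\to X$ with $\gamma(0)=x$. For $\gamma\in P_x(X)$ and $t\ge 0$, write $\gamma_{<t}=\gamma|_{[0,t)}$ and $\gamma_{\le t}=\gamma|_{[0,t]}$. Given starting points $m$ (man) and $l$ (lion) in $X$, a strategy for the lion is a function $S:P_m(X)\to P_l(X)$ such that (i) for each $\alpha\in P_m(X)$ there exists $t\ge 0$ with $S(\alpha)(t)=\alpha(t)$; and (ii) (no-lookahead rule) whenever $\alpha,\alpha'\in P_m(X)$ and $t\ge0$ satisfy $\alpha_{<t}=\alpha'_{<t}$, then $S(\alpha)_{\le t}=S(\alpha')_{\le t}$. The Axiom of Choice is assumed. *)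

From mathcomp Require Import all_boot all_order all_algebra.
From mathcomp Require Import all_classical all_reals topology normedtype.
Set Implicit Arguments. Unset Strict Implicit. Unset Printing Implicit Defensive.
Import Order.TTheory GRing.Theory Num.Theory.
Import numFieldNormedType.Exports.
Local Open Scope classical_set_scope.
Local Open Scope ring_scope.

Definition indiscrete (X : topologicalType) : Prop :=
  forall A : set X, open A -> A = set0 \/ A = setT.

(* Paths are represented by functions R -> X; only their values on [0,+oo)
   matter.  gamma is in P_x(X) iff it is continuous on [0,+oo) (subspace
   topology) and gamma 0 = x. *)
Definition is_path (R : realType) (X : topologicalType) (x : X) (g : R -> X)
  : Prop :=
  {within [set t : R | 0 <= t], continuous g} /\ g 0 = x.

Definition agree_lt (R : realType) (X : Type) (t : R) (f g : R -> X) : Prop :=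
  forall s, 0 <= s -> s < t -> f s = g s.

Definition agree_le (R : realType) (X : Type) (t : R) (f g : R -> X) : Prop :=
  forall s, 0 <= s -> s <= t -> f s = g s.

(* A lion strategy: a map on paths (its values on non-paths are irrelevant). *)
Definition lion_strategy (R : realType) (X : topologicalType) (m l : X)
  (S : (R -> X) -> (R -> X)) : Prop :=
  (forall a, is_path m a -> is_path l (S a)) /\
  (forall a, is_path m a -> exists t : R, 0 <= t /\ S a t = a t) /\
  (forall a a' (t : R), is_path m a -> is_path m a' -> 0 <= t ->
      agree_lt t a a' -> agree_le t (S a) (S a')).

Definition lion_has_strategy (R : realType) (X : topologicalType) (m l : X)
  : Prop := exists S : (R -> X) -> (R -> X), lion_strategy m l S.

From mathcomp Require Import all_boot all_order all_algebra.
From mathcomp Require Import all_classical all_reals topology normedtype.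
From Stdlib Require Import ClassicalEpsilon.
Set Implicit Arguments. Unset Strict Implicit. Unset Printing Implicit Defensive.
Import Order.TTheory GRing.Theory Num.Theory.
Local Open Scope classical_set_scope.
Local Open Scope ring_scope.

(* In an indiscrete space every map is continuous, so the lion may jump, and
   it only has to look at the germ of the man's path at time 0.  Choose, by
   the axiom of choice, a representative of every class of sequences modulo
   eventual equality; at a time t in (1/(k+1), 1/k] the lion sits at the k-th
   term of the representative of the class of (a(1/j))_j.  Two man paths that
   agree on some [0, t) with t > 0 give the same class, hence the same lion
   path; and since the representative eventually coincides with (a(1/j))_j,
   the lion is on the man at time 1/N for N large. *)

Lemma indiscrete_continuous (T X : topologicalType) (f : T -> X) :
  indiscrete X -> continuous f.
Proof.
move=> hX x B; rewrite nbhsE => -[U [oU Ufx] UB].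
case: (hX U oU) => U_eq; first by rewrite U_eq in Ufx.
by apply: (filterS _ filterT) => y _; apply: UB; rewrite U_eq.
Qed.

Section ClassRepresentative.
Variables (T : Type) (x0 : T) (e : T -> T -> Prop).
Hypotheses (e_refl : forall x, e x x) (e_sym : forall x y, e x y -> e y x)
  (e_trans : forall x y z, e x y -> e y z -> e x z).

Definition class_rep (x : T) : T := epsilon (inhabits x0) (e^~ x).

Lemma class_repP x : e (class_rep x) x.
Proof. exact: (epsilon_spec (inhabits x0) (e^~ x) (ex_intro _ x (e_refl x))). Qed.

Lemma class_rep_eq x y : e x y -> class_rep x = class_rep y.
Proof.
move=> exy; rewrite /class_rep; congr epsilon.
apply: funext => z; apply: propext; split => [ezx|ezy].
- exact: e_trans ezx exy.
- exact: e_trans ezy (e_sym exy).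
Qed.

End ClassRepresentative.

Definition eventually_eq (X : Type) (u v : nat -> X) : Prop :=
  \forall n \near \oo, u n = v n.

Lemma eventually_eq_refl (X : Type) (u : nat -> X) : eventually_eq u u.
Proof. exact: nearW. Qed.

Lemma eventually_eq_sym (X : Type) (u v : nat -> X) :
  eventually_eq u v -> eventually_eq v u.
Proof. by apply: filterS. Qed.

Lemma eventually_eq_trans (X : Type) (u v w : nat -> X) :
  eventually_eq u v -> eventually_eq v w -> eventually_eq u w.
Proof. by apply: filterS2 => n ->. Qed.

Section IndiscreteLion.
Variables (R : realType) (X : topologicalType) (l : X).

Definition germ_rep : (nat -> X) -> nat -> X :=
  class_rep (fun=> l) (@eventually_eq X).

Lemma germ_repP u : eventually_eq (germ_rep u) u.
Proof. exact: (class_repP _ (@eventually_eq_refl X)). Qed.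

Lemma germ_rep_eq u v : eventually_eq u v -> germ_rep u = germ_rep v.
Proof. exact: (class_rep_eq _ (@eventually_eq_sym X) (@eventually_eq_trans X)). Qed.

Definition samples (a : R -> X) (j : nat) : X := a j%:R^-1.

(* At a time t in (1/(k+1), 1/k] we have [truncn t^-1 = k]. *)
Definition germ_strategy (a : R -> X) (t : R) : X :=
  if 0 < t then germ_rep (samples a) (Num.truncn t^-1) else l.

Lemma germ_strategy_path a : indiscrete X -> is_path l (germ_strategy a).
Proof.
move=> hX; split; first exact/continuous_subspaceT/indiscrete_continuous.
by rewrite /germ_strategy ltxx.
Qed.

Lemma germ_strategy_catches a : exists t : R, 0 <= t /\ germ_strategy a t = a t.
Proof.
have [N _ repN] := germ_repP (samples a) : \forall n \near \oo, _.
exists N.+1%:R^-1; rewrite invr_ge0 ler0n; split => //.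
rewrite /germ_strategy invr_gt0 ltr0Sn invrK natrK; exact: repN (leqnSn N).
Qed.

Lemma agree_lt_samples a a' (t : R) : 0 < t -> agree_lt t a a' ->
  eventually_eq (samples a) (samples a').
Proof.
move=> t_gt0 aa'; exists (Num.truncn t^-1).+1 => // j /= jt.
apply: aa'; first by rewrite invr_ge0 ler0n.
rewrite -[t]invrK ltf_pV2 ?posrE ?invr_gt0 ?ltr0n //; last first.
  by apply: leq_trans jt.
by apply: lt_le_trans (truncnS_gt _) _; rewrite ler_nat.
Qed.

Lemma germ_strategy_no_lookahead a a' (t : R) : agree_lt t a a' ->
  agree_le t (germ_strategy a) (germ_strategy a').
Proof.
move=> aa' s s_ge0 s_le_t; rewrite /germ_strategy.
case: ifPn => // s_gt0.
have t_gt0 : 0 < t by apply: lt_le_trans s_le_t.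
by rewrite (germ_rep_eq (agree_lt_samples t_gt0 aa')).
Qed.

End IndiscreteLion.

Theorem mainTheorem3 (R : realType) (X : topologicalType) :
  indiscrete X -> forall m l : X, lion_has_strategy R m l.
Proof.
move=> hX m l; exists (@germ_strategy R X l); split; [|split].
- by move=> a _; apply: germ_strategy_path.
- by move=> a _; apply: germ_strategy_catches.
- by move=> a a' t _ _ _; apply: germ_strategy_no_lookahead.
Qed.
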